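(* Let $p$ be a binary word of length $l$ whose maximum run size is $i$. Then $p$ does not have an internal zero at $l+1$ if and only if for every $j\in\{1,\dots,i\}$, $p$ has a run of size $j$.
   Context: $c_p(w)$ is the number of occurrences of $p$ as a (not necessarily consecutive) subsequence of $w$; $B_{n,p}(k)$ is the number of binary words of length $n$ with $c_p(w)=k$. A run is a maximal block of consecutive equal letters; its size is its length. $p$ has an internal zero at $n$ if there exist $0\le k_1<k_2<k_3$ with $B_{n,p}(k_1)\ne0$, $B_{n,p}(k_2)=0$, $B_{n,p}(k_3)\ne0$. *)

From mathcomp Require Import all_boot.
Set Implicit Arguments. Unset Strict Implicit. Unset Printing Implicit Defensive.

(* c_p(w): number of occurrences of p as a (not necessarily consecutive)
   subsequence of w, i.e. the number of index subsets of w (encoded as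
   masks of length |w|) selecting exactly the word p. *)
Definition occ (p w : seq bool) : nat :=
  #|[set m : (size w).-tuple bool | mask m w == p]|.

Definition B (n : nat) (p : seq bool) (k : nat) : nat :=
  #|[set w : n.-tuple bool | occ p w == k]|.

Definition internal_zero (p : seq bool) (n : nat) : Prop :=
  exists k1 k2 k3, [/\ k1 < k2 < k3, B n p k1 != 0, B n p k2 = 0 & B n p k3 != 0].

Definition has_run (w : seq bool) (j : nat) : Prop :=
  exists a b, [/\ 0 < j, a + j <= size w,
    (forall t, t < j -> nth false w (a + t) = b),
    (0 < a -> nth false w a.-1 != b) &
    (a + j < size w -> nth false w (a + j) != b)].

Definition max_run (w : seq bool) (i : nat) : Prop :=
  has_run w i /\ (forall j, has_run w j -> j <= i).

From mathcomp Require Import all_boot zify.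

(* Let |p| = l and let w range over words of length l+1.  An
   occurrence of p in such a w is determined by the single position d that
   it omits, so c_p(w) is the number of positions d with (w minus d) = p.
   Deleting any position inside one maximal run of w gives the same word,
   while deleting positions of two different runs gives different words;
   hence if c_p(w) > 0 then c_p(w) = m, where w is p with one letter added
   to a maximal run of p of size m-1 (a "new" run when m = 1).  Therefore the
   values k with B_{l+1,p}(k) <> 0 are exactly 0, 1 and j+1 for the run
   sizes j of p (lemma [B_neq0_iff]), and the theorem follows: this set has
   no gap iff every size 1..i occurs as a run size, i being the largest. *)

Fixpoint bitseqs n : seq (seq bool) :=
  if n is n'.+1 then [seq true :: m | m <- bitseqs n'] ++ [seq false :: m | m <- bitseqs n']
  else [:: [::]].

Lemma cons_inj (b : bool) : injective (cons b).
Proof. by move=> x y []. Qed.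

Lemma mem_bitseqs n s : (s \in bitseqs n) = (size s == n).
Proof.
elim: n s => [|n IH] [|b s] //=; rewrite mem_cat.
  by apply/negbTE; rewrite negb_or; apply/andP; split; apply/mapP => [[m _]].
have notin c : (c :: s \in [seq ~~ c :: m | m <- bitseqs n]) = false.
  by apply/negbTE/mapP => -[m _ []]; case: c.
by case: b; rewrite (mem_map (@cons_inj _)) IH ?(notin true) ?(notin false) ?orbF.
Qed.

Lemma uniq_bitseqs n : uniq (bitseqs n).
Proof.
elim: n => [|n IH] //=.
rewrite cat_uniq !(map_inj_uniq (@cons_inj _)) IH /= andbT.
by apply/hasPn => x /mapP [m _ ->]; apply/mapP => [[m' _]].
Qed.

Lemma card_tuple_set n (P : pred (seq bool)) :
  #|[set m : n.-tuple bool | P m]| = count P (bitseqs n).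
Proof.
rewrite cardsE cardE /enum_mem size_filter -(count_map val P).
apply/permP/uniq_perm.
- by rewrite (map_inj_uniq val_inj) -enumT enum_uniq.
- exact: uniq_bitseqs.
move=> s; rewrite -enumT mem_bitseqs; apply/mapP/idP => [[t _ ->] | Hs].
  by rewrite size_tuple.
by exists (Tuple Hs); rewrite // mem_enum.
Qed.

(* The usual recursion for the number of occurrences of p in w as a
   subsequence: an occurrence either avoids or uses the first letter of w. *)
Fixpoint subseq_count (p w : seq bool) : nat :=
  match w with
  | [::] => nat_of_bool (p == [::])
  | y :: w' => subseq_count p w' +
               (if p is x :: p' then (x == y) * subseq_count p' w' else 0)
  end.

Lemma occ_subseq_count p w : occ p w = subseq_count p w.
Proof.
rewrite /occ (card_tuple_set _ (fun m => mask m w == p)).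
elim: w p => [|y w IH] p; first by rewrite /= addn0 eq_sym.
rewrite [size _]/= [bitseqs _]/= count_cat !count_map /= addnC -IH.
congr (_ + _); case: p => [|x p'].
  by rewrite (@eq_count _ _ pred0) ?count_pred0.
case: (eqVneq y x) => [->|ne].
  by rewrite mul1n -IH; apply: eq_count => m /=; rewrite eqseq_cons eqxx.
by rewrite mul0n (@eq_count _ _ pred0) ?count_pred0 // => m /=;
   rewrite eqseq_cons (negbTE ne).
Qed.

Lemma subseq_count_short p w : size w < size p -> subseq_count p w = 0.
Proof.
elim: w p => [|y w IH] [|x p] //= H.
by rewrite !IH ?muln0 //; apply: ltnW.
Qed.

Lemma subseq_count_same_size p w : size w = size p -> subseq_count p w = (w == p).
Proof.
elim: w p => [|y w IH] [|x p] //= [H].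
by rewrite subseq_count_short ?H // IH // eqseq_cons eq_sym add0n mulnb.
Qed.

Definition delete (d : nat) (w : seq bool) := take d w ++ drop d.+1 w.

Definition deletions (p w : seq bool) :=
  count (fun d => delete d w == p) (iota 0 (size w)).

Lemma delete0 y w : delete 0 (y :: w) = w.
Proof. by rewrite /delete /= drop0. Qed.

Lemma deleteS d y w : delete d.+1 (y :: w) = y :: delete d w.
Proof. by []. Qed.

(* A subsequence one letter shorter than w omits exactly one position. *)
Lemma subseq_count_deletions p w :
  size w = (size p).+1 -> subseq_count p w = deletions p w.
Proof.
rewrite /deletions; elim: w p => [|y w IH] p //= [H].
rewrite subseq_count_same_size // delete0 (iotaDl 1 0) count_map; congr (_ + _).
case: p H => [|x p] /= H; first by move/eqP: H; rewrite size_eq0 => /eqP ->.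
rewrite IH //; case: (eqVneq x y) => [->|ne].
  by rewrite mul1n; apply: eq_count => d /=; rewrite add1n deleteS eqseq_cons eqxx.
rewrite mul0n (@eq_count _ _ pred0) ?count_pred0 // => d /=.
by rewrite add1n deleteS eqseq_cons eq_sym (negbTE ne).
Qed.

Lemma delete_cat u d s : delete (size u + d) (u ++ s) = u ++ delete d s.
Proof. by elim: u => //= x u IH; rewrite addSn deleteS IH. Qed.

Lemma nth_delete d w t : d < size w ->
  nth false (delete d w) t = nth false w (if t < d then t else t.+1).
Proof.
move=> H; rewrite /delete nth_cat size_take H.
by case: ifP => td; [rewrite nth_take | rewrite nth_drop; congr nth; lia].
Qed.

(* If deleting positions d < e gives the same word, then w is constant on
   [d, e]: this is why distinct maximal runs give distinct deletions. *)
Lemma delete_eq_const d e w t : d < e -> e < size w -> delete d w = delete e w ->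
  d <= t < e -> nth false w t = nth false w t.+1.
Proof.
move=> de es E /andP [dt te].
have := congr1 (fun s => nth false s t) E.
by rewrite /= !nth_delete ?(ltn_trans de es) // te ltnNge dt.
Qed.

(* The block nseq m b sits between u and v as a maximal run: the neighbouring
   letters (when they exist) differ from b. *)
Definition left_bounded (u : seq bool) b := 0 < size u -> nth false u (size u).-1 != b.
Definition right_bounded (v : seq bool) b := 0 < size v -> nth false v 0 != b.

Lemma maximal_run_at w d : d < size w -> exists u m b v,
  [/\ w = u ++ nseq m b ++ v, 0 < m, size u <= d < size u + m,
      left_bounded u b & right_bounded v b].
Proof.
elim: w d => [|y w IH] d //=.
case: w IH => [|z w'] IH Hd; first by exists [::], 1, y, [::]; split => //; lia.
have /IH [u [m [b [v [Ew m0 Hud lu rv]]]]] : d.-1 < size (z :: w') by simpl in *; lia.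
rewrite Ew {IH Ew}; case: (eqVneq u [::]) => [u0|un]; first subst u.
  case: (eqVneq b y) => [b_eq_y|bny]; first subst b.
    by exists [::], m.+1, y, v; split => //; simpl in *; lia.
  case: d Hd Hud => [|d] Hd Hud.
    exists [::], 1, y, (nseq m b ++ v); split => //.
    by rewrite /right_bounded; case: m m0 {Hud} => // m _ _ /=; rewrite eq_sym.
  by exists [:: y], m, b, v; split => //=; rewrite /left_bounded /= eq_sym.
case: d Hd Hud => [|d] Hd Hud; first by case: u un {lu} Hud => //= ? ?; lia.
exists (y :: u), m, b, v; split => //=.
by case: u un lu {Hud} => //= a u _ lu _; apply: lu.
Qed.

Lemma nth_run u m b v t : size u <= t < size u + m ->
  nth false (u ++ nseq m b ++ v) t = b.
Proof.
move=> /andP [h1 h2]; rewrite nth_cat ltnNge h1 /= nth_cat size_nseq.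
have -> : t - size u < m by lia.
by rewrite nth_nseq; case: ifP => //; lia.
Qed.

Lemma nth_after_run u m b v k :
  nth false (u ++ nseq m b ++ v) (size u + m + k) = nth false v k.
Proof.
rewrite nth_cat (_ : size u + m + k < size u = false); last lia.
rewrite nth_cat size_nseq (_ : size u + m + k - size u < m = false); last lia.
by congr nth; lia.
Qed.

Lemma delete_in_run u m b v k : k < m ->
  delete (size u + k) (u ++ nseq m b ++ v) = u ++ nseq m.-1 b ++ v.
Proof.
move=> km; have -> : nseq m b = nseq k b ++ b :: nseq (m - k.+1) b.
  by rewrite -[b :: _]/(nseq (m - k.+1).+1 b) -nseqD; congr nseq; lia.
rewrite delete_cat -catA -[k in delete k _](size_nseq k b) -[size (nseq k b)]addn0.
by rewrite delete_cat delete0 (catA (nseq k b)) -nseqD; congr (_ ++ nseq _ _ ++ _); lia.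
Qed.

Lemma deletions_run u m b v : 0 < m -> left_bounded u b -> right_bounded v b ->
  deletions (u ++ nseq m.-1 b ++ v) (u ++ nseq m b ++ v) = m.
Proof.
move=> m0 lu rv; rewrite /deletions; set w := u ++ nseq m b ++ v.
have sw : size w = size u + m + size v by rewrite /w !size_cat size_nseq addnA.
have del_u : delete (size u) w = u ++ nseq m.-1 b ++ v.
  by rewrite -[size u]addn0 delete_in_run.
have before d : d < size u -> delete d w != delete (size u) w.
  move=> hd; apply/eqP => E.
  have := @delete_eq_const d (size u) w (size u).-1.
  rewrite sw E => /(_ ltac:(lia) ltac:(lia) erefl ltac:(lia)).
  rewrite nth_cat (_ : (size u).-1 < size u); last lia.
  rewrite (_ : (size u).-1.+1 = size u); last lia.
  by rewrite nth_run; [apply/eqP/lu; lia | lia].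
have after d : size u + m <= d < size w -> delete (size u) w != delete d w.
  move=> hd; apply/eqP => E.
  have := @delete_eq_const (size u) d w (size u + m).-1.
  rewrite sw E => /(_ ltac:(lia) ltac:(lia) erefl ltac:(lia)).
  rewrite nth_run; last lia.
  rewrite (_ : (size u + m).-1.+1 = size u + m + 0); last lia.
  by rewrite nth_after_run => /esym/eqP; apply/negP/rv; lia.
rewrite sw !iotaD !count_cat add0n -del_u.
rewrite (@eq_in_count _ _ pred0 (iota 0 (size u))); last first.
  by move=> d; rewrite mem_iota => hd; apply/negbTE/before; lia.
rewrite (@eq_in_count _ _ predT (iota (size u) m)); last first.
  move=> d; rewrite mem_iota => hd /=; apply/eqP.
  by rewrite (_ : d = size u + (d - size u)) ?del_u ?delete_in_run //; lia.
rewrite (@eq_in_count _ _ pred0 (iota (size u + m) (size v))); last first.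
  by move=> d; rewrite mem_iota => hd; apply/negbTE; rewrite eq_sym after //; lia.
by rewrite !count_pred0 count_predT size_iota add0n addn0.
Qed.

Definition run_split (p : seq bool) j := exists u b v,
  [/\ p = u ++ nseq j b ++ v, 0 < j, left_bounded u b & right_bounded v b].

Lemma has_run_split p j : has_run p j <-> run_split p j.
Proof.
split=> [[a [b [j0 hs hm hl hr]]] | [u [b [v [E j0 lu rv]]]]].
  exists (take a p), b, (drop (a + j) p).
  have st : size (take a p) = a by rewrite size_take; case: ifP => //; lia.
  split => //.
  - have -> : nseq j b = take j (drop a p).
      apply: (@eq_from_nth _ false).
        by rewrite size_nseq size_take size_drop; case: ifP => //; lia.
      by move=> t; rewrite size_nseq => tj; rewrite nth_nseq tj nth_take // nth_drop hm.
    by rewrite (addnC a j) -drop_drop !cat_take_drop.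
  - by rewrite /left_bounded st => a0; rewrite nth_take; [exact: hl | lia].
  - by rewrite /right_bounded size_drop => h; rewrite nth_drop addn0; apply: hr; lia.
have sp : size p = size u + j + size v by rewrite E !size_cat size_nseq addnA.
exists (size u), b; split => //; first lia.
- by move=> t tj; rewrite E nth_run //; lia.
- by move=> u0; rewrite E nth_cat (_ : (size u).-1 < size u); [exact: lu | lia].
- by move=> hs; rewrite E -[size u + j]addn0 nth_after_run; apply: rv; lia.
Qed.

Lemma deletions_large p w : size w = (size p).+1 -> 1 < deletions p w ->
  has_run p (deletions p w).-1.
Proof.
move=> sw h; apply/has_run_split.
have /hasP [d] : has (fun d => delete d w == p) (iota 0 (size w)).
  by rewrite has_count ltnW.
rewrite mem_iota add0n => /andP [_ hd] /eqP E.
have [u [m [b [v [Ew m0 hu lu rv]]]]] := maximal_run_at _ _ hd.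
have Ep : p = u ++ nseq m.-1 b ++ v.
  by rewrite -E Ew (_ : d = size u + (d - size u)) ?delete_in_run //; lia.
have Hm : deletions p w = m by rewrite Ep Ew deletions_run.
by rewrite Hm; exists u, b, v; split => //; move: h; rewrite Hm; lia.
Qed.

Lemma deletions_of_run p j : has_run p j ->
  exists w, size w = (size p).+1 /\ deletions p w = j.+1.
Proof.
move=> /has_run_split [u [b [v [E j0 lu rv]]]].
exists (u ++ nseq j.+1 b ++ v); split; first by rewrite E !size_cat !size_nseq; lia.
by rewrite E -[j in nseq j b]/(j.+1.-1) deletions_run.
Qed.

Lemma deletions_small p k : 0 < size p -> k <= 1 ->
  exists w, size w = (size p).+1 /\ deletions p w = k.
Proof.
case: p => [|x p] // _; case: k => [|[|]] // _.
  exists (nseq (size p).+2 (~~ x)); split; first by rewrite size_nseq.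
  rewrite /deletions (@eq_in_count _ _ pred0) ?count_pred0 // => d.
  rewrite mem_iota size_nseq => hd; apply/negbTE/eqP.
  have := @delete_in_run [::] (size p).+2 (~~ x) [::] d.
  by rewrite /= cats0 => ->; [case; case: x | lia].
exists (~~ x :: x :: p); split => //.
by rewrite (@deletions_run [::] 1 (~~ x) (x :: p)) // => _ /=; case: x.
Qed.

Lemma B_neq0_deletions p k : B (size p).+1 p k != 0 <->
  exists w, size w = (size p).+1 /\ deletions p w = k.
Proof.
rewrite /B cards_eq0; split => [/set0Pn [t] | [w [Hs Hd]]].
  rewrite inE occ_subseq_count subseq_count_deletions ?size_tuple // => /eqP H.
  by exists t; rewrite size_tuple.
have Hs' : size w == (size p).+1 by apply/eqP.
apply/set0Pn; exists (Tuple Hs').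
by rewrite inE occ_subseq_count subseq_count_deletions // Hd.
Qed.

Lemma B_neq0_iff p k : 0 < size p ->
  (B (size p).+1 p k != 0 <-> k <= 1 \/ has_run p k.-1).
Proof.
move=> p0; rewrite B_neq0_deletions.
split => [[w [Hs <-]] | [k1 | Hk]].
- by case: (leqP (deletions p w) 1) => h; [left | right; apply: deletions_large].
- exact: deletions_small.
- case: k Hk => [|k] /= run_k; last exact: deletions_of_run.
  by case: run_k => ? [? []].
Qed.

Theorem mainTheorem12 (p : seq bool) (l i : nat) :
  size p = l -> max_run p i ->
  (~ internal_zero p l.+1 <-> (forall j, 1 <= j <= i -> has_run p j)).
Proof.
move=> <- [run_i run_le_i].
have p0 : 0 < size p by case: run_i => a [b [? ? _ _ _]]; lia.
have realized k : B (size p).+1 p k != 0 <-> k <= 1 \/ has_run p k.-1.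
  exact: B_neq0_iff.
split => [no_gap j /andP [j1 ji] | all_runs [k1 [k2 [k3 [/andP [lt12 lt23] _ B2 B3]]]]].
- (* a missing run size j < i would leave the gap 0 < j+1 < i+1 *)
  case: (eqVneq j i) => [-> // | jni].
  case: (eqVneq (B (size p).+1 p j.+1) 0) => [Bj | /realized [|//]]; last lia.
  exfalso; apply: no_gap; exists 0, j.+1, i.+1; split.
  + by apply/andP; split => //; rewrite ltnS ltn_neqAle jni ji.
  + by apply/realized; left.
  + exact: Bj.
  + by apply/realized; right.
- (* every value between 0 and the largest realized one, i+1, is realized *)
  have k3_le : k3 <= i.+1 by case/realized: B3 => [|/run_le_i]; lia.
  move/eqP: B2; apply/negP/realized.
  by case: (leqP k2 1) => h; [left | right; apply: all_runs; lia].
Qed.
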